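(* Fix $\epsilon\in(0,\frac13)$ and $d\ge4$. Let $f:\{0,1\}^d\to\mathbb{R}$ satisfy $\ell_0(f,\mathrm{Lip})\le\epsilon$. Choose $p\in\{0,1\}^d$ uniformly at random, set $t=2\sqrt{d\log(d/\epsilon)}$ and $I=[f(p)-t,f(p)+t]$. Then, with probability at most $\frac5{12}$ over $p$, $\Pr_{x}[f(x)\notin I]>\epsilon[\overline I]+\frac\epsilon d$, where $x$ is uniform in $\{0,1\}^d$ and $\overline I=\mathbb{R}\setminus I$.
   Context: On $\{0,1\}^d$ with Hamming distance, $f$ is Lipschitz if $|f(x)-f(y)|\le|x-y|$; $\ell_0(f,\mathrm{Lip})=\min_{g\text{ Lipschitz}}\Pr_x[f(x)\ne g(x)]$. $VS_f(x,y)=|f(x)-f(y)|-|x-y|$ if positive, else $0$; $B_{0,f}$ is the graph on $\{0,1\}^d$ with an edge between $x,y$ iff $VS_f(x,y)>0$. Fix a canonical minimum vertex cover $C$ of $B_{0,f}$; for an interval (or set) $J\subseteq\mathbb{R}$, $\epsilon[J]=|\{x\in C: f(x)\in J\}|/2^d$. (Equivalently, $\Pr_x[f(x)\notin I]$ is the $\ell_0$-distance between $f$ and the partial function $f_I$ that agrees with $f$ where $f(x)\in I$ and is undefined elsewhere.) *)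

From HB Require Import structures.
From mathcomp Require Import all_boot all_order all_algebra.
From mathcomp Require Import all_classical all_reals all_analysis.
Set Implicit Arguments. Unset Strict Implicit. Unset Printing Implicit Defensive.
Import Order.TTheory GRing.Theory Num.Theory.
Local Open Scope ring_scope.

Definition cube (d : nat) := {ffun 'I_d -> bool}.

Definition hamming (d : nat) (x y : cube d) : nat := #|[pred i | x i != y i]|.

Section Defs.
Variables (R : realType) (d : nat).

Definition lipschitz (g : cube d -> R) : Prop :=
  forall x y : cube d, `|g x - g y| <= (hamming x y)%:R.

Definition disagree (f g : cube d -> R) : R :=
  #|[pred x : cube d | f x != g x]|%:R / (2 ^ d)%:R.

(* l_0(f, Lip) = min over Lipschitz g of Pr_x[f x <> g x] (taken as infimum;
   the minimum is attained since there are finitely many possible values). *)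
Definition l0_Lip (f : cube d -> R) : R :=
  inf [set r : R | exists g : cube d -> R, lipschitz g /\ r = disagree f g]%classic.

Definition VS (f : cube d -> R) (x y : cube d) : R :=
  Num.max (`|f x - f y| - (hamming x y)%:R) 0.

Definition B0 (f : cube d -> R) (x y : cube d) : bool := 0 < VS f x y.

Definition vertex_cover (f : cube d -> R) (C : {set cube d}) : Prop :=
  forall x y : cube d, B0 f x y -> (x \in C) || (y \in C).

Definition min_vertex_cover (f : cube d -> R) (C : {set cube d}) : Prop :=
  vertex_cover f C /\ forall C' : {set cube d}, vertex_cover f C' -> (#|C| <= #|C'|)%N.

Definition epsC (f : cube d -> R) (C : {set cube d}) (J : R -> bool) : R :=
  #|[pred x : cube d | (x \in C) && J (f x)]|%:R / (2 ^ d)%:R.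

Definition prob_notin (f : cube d -> R) (J : R -> bool) : R :=
  #|[pred x : cube d | ~~ J (f x)]|%:R / (2 ^ d)%:R.

Definition intv (a t : R) : R -> bool := fun r => (a - t <= r) && (r <= a + t).

End Defs.

(* Outside a minimum vertex cover C of the violation graph, f is Lipschitz, so
   (McShane) it extends to a Lipschitz g on the whole cube; and |C| <= eps 2^d,
   because the disagreement set of f with any Lipschitz function is itself a
   vertex cover.  If p lies outside C and Pr_x[f x \notin I] exceeds
   eps[~I] + eps/d, then more than eps 2^d / d points x outside C have
   f x = g x outside I, i.e. |g x - g p| > t.

   Revealing one coordinate at a time bounds the exponential moments of a
   Lipschitz g: E exp(lam g) E exp(-lam g) <= (1 + 3 lam^2/16)^(2d).  Hence at
   most 2 exp(-lam t) (1 + 3 lam^2/16)^(2d) 4^d pairs (x, p) are t-far in g,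
   which for lam = 4t/(3d) is at most eps 4^d / (12 d); by Markov at most
   2^d/12 points p have more than eps 2^d / d far partners.  So the bad points
   number at most (1/3 + 1/12) 2^d. *)

From Pilot Require Import Defs.
From HB Require Import structures.
From mathcomp Require Import all_boot all_order all_algebra.
From mathcomp Require Import all_classical all_reals all_analysis.
From mathcomp Require Import ring lra.
Set Implicit Arguments. Unset Strict Implicit. Unset Printing Implicit Defensive.
Import Order.TTheory GRing.Theory Num.Theory.
Local Open Scope ring_scope.

Section Hypercube.
Variable d : nat.
Implicit Types x y z : cube d.

Lemma card_cube : #|{: cube d}| = (2 ^ d)%N.
Proof. by rewrite card_ffun card_bool card_ord. Qed.

Lemma hamming_xx x : hamming x x = 0%N.
Proof. by apply: eq_card0 => i; rewrite inE eqxx. Qed.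

Lemma hamming_sym x y : hamming x y = hamming y x.
Proof. by apply: eq_card => i; rewrite !inE eq_sym. Qed.

Lemma hamming_triangle x y z : (hamming x z <= hamming x y + hamming y z)%N.
Proof.
rewrite /hamming -cardUI; apply: leq_trans (leq_addr _ _).
apply: subset_leq_card; apply/fintype.subsetP => i; rewrite !inE.
by case: (x i); case: (y i); case: (z i).
Qed.

Lemma hamming_le_dim x y : (hamming x y <= d)%N.
Proof. by apply: leq_trans (max_card _) _; rewrite card_ord. Qed.

Lemma hamming_le1 (k : 'I_d) x y :
  (forall i, i != k -> x i = y i) -> (hamming x y <= 1)%N.
Proof.
move=> Exy; rewrite /hamming -(card1 k); apply: subset_leq_card.
by apply/fintype.subsetP => i; rewrite !inE; apply: contraR => /Exy ->.
Qed.

Definition flip (k : 'I_d) x : cube d :=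
  [ffun i => if i == k then ~~ x i else x i].

Lemma flipK k : involutive (flip k).
Proof.
by move=> x; apply/ffunP => i; rewrite !ffunE; case: eqP => // _; rewrite negbK.
Qed.

Definition splice (k : nat) x z : cube d :=
  [ffun i : 'I_d => if (i < k)%N then x i else z i].

Lemma splice_dim x z : splice d x z = x.
Proof. by apply/ffunP => i; rewrite ffunE ltn_ord. Qed.

Lemma splice0 x z : splice 0 x z = z.
Proof. by apply/ffunP => i; rewrite ffunE. Qed.

Lemma splice_flip (k : 'I_d) x z : splice k.+1 x (flip k z) = splice k.+1 x z.
Proof.
apply/ffunP => i; rewrite !ffunE; case: ltnP => // ki.
by case: eqP => // ik; move: ki; rewrite ik ltnn.
Qed.

Lemma spliceS (k : 'I_d) x z :
  splice k x z = splice k.+1 (if z k == x k then x else flip k x) z.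
Proof.
apply/ffunP => i; rewrite !ffunE ltnS; case: (ltngtP i k) => [ik | // | ik].
- have /negbTE nik : i != k by apply: contraTneq ik => ->; rewrite ltnn.
  by case: eqP => _; rewrite ?ffunE ?nik.
- have -> : i = k by apply: val_inj.
  case: eqP => [-> //|]; rewrite ffunE eqxx.
  by case: (z k); case: (x k).
Qed.

End Hypercube.

Section ExponentialMoment.
Variables (R : realType) (d : nat).
Implicit Types (g : cube d -> R) (x z : cube d).

Lemma natr_pow2_gt0 : 0 < (2 ^ d)%:R :> R.
Proof. by rewrite ltr0n expn_gt0. Qed.

Lemma sum_cube_cst (c : R) : \sum_(z : cube d) c = c * (2 ^ d)%:R.
Proof. by rewrite sumr_const card_cube mulr_natr. Qed.

Lemma sum_flip (k : 'I_d) (F : cube d -> R) : \sum_z F (flip k z) = \sum_z F z.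
Proof. by rewrite [RHS](reindex_inj (inv_inj (flipK k))). Qed.

Lemma sum_flip_invariant (k : 'I_d) (b : bool) (F : cube d -> R) :
  (forall z, F (flip k z) = F z) -> \sum_z F z = 2 * \sum_(z : cube d | z k == b) F z.
Proof.
move=> FE; rewrite (bigID (fun z : cube d => z k == b)) /=.
rewrite [X in _ + X](reindex_inj (inv_inj (flipK k))) /=.
rewrite (eq_big (fun z : cube d => z k == b) F (P1 := fun z => flip k z k != b)
  (F1 := fun z => F (flip k z))) => [|z|z _]; last 2 first.
- by rewrite ffunE eqxx; case: (z k); case: b.
- by rewrite FE.
by ring.
Qed.

(* E[g | first k coordinates = those of x]; a Doob martingale in k. *)
Definition cond_mean g (k : nat) x : R :=
  (\sum_z g (splice k x z)) / (2 ^ d)%:R.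

Lemma cond_mean_dim g x : cond_mean g d x = g x.
Proof.
rewrite /cond_mean (eq_bigr (fun=> g x)) => [|z _]; last by rewrite splice_dim.
by rewrite sum_cube_cst mulfK // gt_eqF // natr_pow2_gt0.
Qed.

Lemma cond_mean0 g x : cond_mean g 0 x = (\sum_z g z) / (2 ^ d)%:R.
Proof. by rewrite /cond_mean (eq_bigr g) // => z _; rewrite splice0. Qed.

Lemma cond_meanS g (k : 'I_d) x :
  cond_mean g k x = (cond_mean g k.+1 x + cond_mean g k.+1 (flip k x)) / 2.
Proof.
have same : \sum_(z : cube d | z k == x k) g (splice k x z) =
    \sum_(z : cube d | z k == x k) g (splice k.+1 x z).
  by apply: eq_bigr => z zk; rewrite spliceS zk.
have diff : \sum_(z : cube d | z k != x k) g (splice k x z) =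
    \sum_(z : cube d | z k == ~~ x k) g (splice k.+1 (flip k x) z).
  rewrite (eq_bigr (fun z => g (splice k.+1 (flip k x) z))) => [|z /negbTE zk].
    by apply: eq_bigl => z; case: (z k); case: (x k).
  by rewrite spliceS zk.
rewrite /cond_mean (bigID (fun z : cube d => z k == x k)) /= same diff.
rewrite (sum_flip_invariant (x k) (fun z => congr1 g (splice_flip k x z))).
rewrite (sum_flip_invariant (~~ x k) (fun z => congr1 g (splice_flip k (flip k x) z))).
have N0 : (2 ^ d)%:R != 0 :> R by rewrite gt_eqF // natr_pow2_gt0.
by field.
Qed.

Lemma cond_mean_flip_lipschitz g (k : 'I_d) x : Defs.lipschitz g ->
  `|cond_mean g k.+1 x - cond_mean g k.+1 (flip k x)| <= 1.
Proof.
move=> Lg; rewrite /cond_mean -mulrBl -sumrB normrM.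
rewrite [`|_^-1|]ger0_norm ?invr_ge0 ?ler0n // ler_pdivrMr ?natr_pow2_gt0 // mul1r.
apply: le_trans (ler_norm_sum _ _ _) _.
rewrite -[X in _ <= X]mul1r -sum_cube_cst; apply: ler_sum => z _.
apply: le_trans (Lg _ _) _; rewrite (_ : 1 = 1%:R :> R) // ler_nat.
by apply: (@hamming_le1 _ k) => i ik; rewrite !ffunE (negbTE ik).
Qed.

Section StepBound.
Variables (mu K : R).
Hypothesis step_le : forall a b : R, `|a - b| <= 1 ->
  expR (mu * a) + expR (mu * b) <= 2 * K * expR (mu * ((a + b) / 2)).

Lemma sum_expR_cond_meanS g (k : 'I_d) : Defs.lipschitz g ->
  \sum_x expR (mu * cond_mean g k.+1 x) <= K * \sum_x expR (mu * cond_mean g k x).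
Proof.
move=> Lg; have -> : \sum_x expR (mu * cond_mean g k.+1 x) =
    (\sum_x (expR (mu * cond_mean g k.+1 x) + expR (mu * cond_mean g k.+1 (flip k x)))) / 2.
  by rewrite big_split /= (sum_flip k (fun x => expR (mu * cond_mean g k.+1 x))); field.
rewrite ler_pdivrMr // mulrC mulr_sumr mulr_sumr; apply: ler_sum => x _.
by rewrite cond_meanS [2 * _]mulrA; apply: step_le; apply: cond_mean_flip_lipschitz.
Qed.

Lemma sum_expR_lipschitz_le g : Defs.lipschitz g ->
  \sum_x expR (mu * g x) <=
    K ^+ d * (2 ^ d)%:R * expR (mu * ((\sum_x g x) / (2 ^ d)%:R)).
Proof.
move=> Lg; have K1 : 1 <= K.
  have := @step_le 0 0; rewrite subrr normr0 ler01 add0r mul0r !mulr0 expR0.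
  by move=> /(_ isT); lra.
have moment_le k : (k <= d)%N ->
    \sum_x expR (mu * cond_mean g k x) <= K ^+ k * \sum_x expR (mu * cond_mean g 0 x).
  elim: k => [|k IH] kd; first by rewrite mul1r.
  apply: le_trans (sum_expR_cond_meanS (Ordinal kd) Lg) _.
  by rewrite exprS -mulrA ler_pM2l ?(lt_le_trans ltr01 K1) // IH // ltnW.
apply: (@le_trans _ _ (K ^+ d * \sum_x expR (mu * cond_mean g 0 x))).
  under eq_bigr => x _ do rewrite -[g x]cond_mean_dim.
  exact: moment_le.
under eq_bigr => x _ do rewrite cond_mean0.
by rewrite sum_cube_cst [_ * (2 ^ d)%:R]mulrC [K ^+ d * _]mulrA.
Qed.

End StepBound.
End ExponentialMoment.

Section ExpInequalities.
Variable R : realType.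
Implicit Types y w mu a b : R.

Lemma expR_le_inv1B y : y < 1 -> expR y <= (1 - y)^-1.
Proof.
move=> y1; rewrite -div1r ler_pdivlMr; last lra.
by have := expR_ge1Dx (- y); have := expRxMexpNx_1 y; have := expR_ge0 y; nra.
Qed.

Lemma invr_pow4_1B_add_le y : y ^+ 2 <= 1 / 36 ->
  ((1 - y) ^+ 4)^-1 + ((1 + y) ^+ 4)^-1 <= 2 + 24 * y ^+ 2.
Proof.
set v := y ^+ 2 => v_le.
have v_ge0 : 0 <= v by rewrite sqr_ge0.
have [y1l y1r] : -1 < y /\ y < 1 by move: v_le; rewrite /v expr2; split; nra.
have P0 : 0 < (1 - y) ^+ 4 by rewrite exprn_gt0 // subr_gt0.
have Q0 : 0 < (1 + y) ^+ 4 by rewrite exprn_gt0 //; lra.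
have -> : ((1 - y) ^+ 4)^-1 + ((1 + y) ^+ 4)^-1 =
    (2 + 12 * v + 2 * v ^+ 2) / (1 - v) ^+ 4.
  by rewrite /v; field; rewrite -/v; apply/and3P; split; apply/eqP; lra.
have Pv0 : 0 < (1 - v) ^+ 4 by rewrite exprn_gt0 //; lra.
rewrite ler_pdivrMr // -subr_ge0.
have -> : (2 + 24 * v) * (1 - v) ^+ 4 - (2 + 12 * v + 2 * v ^+ 2) =
    2 * v * (2 - 43 * v + 68 * v ^+ 2 - 47 * v ^+ 3 + 12 * v ^+ 4) by ring.
have v3 : v ^+ 3 <= v / 1296.
  have : v ^+ 2 <= 1 / 1296 by rewrite expr2; nra.
  by rewrite exprS; nra.
by apply: mulr_ge0; [lra | have := exprn_ge0 4 v_ge0; have := sqr_ge0 v; lra].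
Qed.

Lemma expR_add_expRN_le w : `|w| <= 2 / 3 ->
  expR w + expR (- w) <= 2 + 3 / 2 * w ^+ 2.
Proof.
rewrite ler_norml => /andP [w_ge w_le].
(* e^w = (e^(w/4))^4 <= (1 - w/4)^-4, and symmetrically for -w. *)
have expR4 (z : R) : expR z = expR (z / 4) ^+ 4 by rewrite -expRM_natl; congr expR; field.
have y2 : (w / 4) ^+ 2 <= 1 / 36 by rewrite expr2; nra.
rewrite expR4 [expR (- w)]expR4.
apply: le_trans (_ : ((1 - w / 4) ^+ 4)^-1 + ((1 + w / 4) ^+ 4)^-1 <= _).
  rewrite -!exprVn lerD ?lerXn2r ?nnegrE ?expR_ge0 ?invr_ge0 ?expR_le_inv1B //;
    try lra.
  by rewrite mulNr; have := @expR_le_inv1B (- (w / 4)); rewrite opprK; apply; lra.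
apply: le_trans (invr_pow4_1B_add_le y2) _.
by rewrite (_ : 24 * (w / 4) ^+ 2 = 3 / 2 * w ^+ 2) //; field.
Qed.

Lemma expR_midpoint_le mu a b : `|mu| <= 4 / 3 -> `|a - b| <= 1 ->
  expR (mu * a) + expR (mu * b) <=
    2 * (1 + 3 / 16 * mu ^+ 2) * expR (mu * ((a + b) / 2)).
Proof.
move=> mu_le ab_le; set w := mu * ((a - b) / 2).
have -> : mu * a = mu * ((a + b) / 2) + w by rewrite /w; field.
have -> : mu * b = mu * ((a + b) / 2) + - w by rewrite /w; field.
rewrite !expRD -mulrDr [_ * expR (mu * _)]mulrC ler_wpM2l ?expR_ge0 //.
have w_le : `|w| <= 2 / 3.
  rewrite /w !normrM [`|2^-1|]ger0_norm ?invr_ge0 //.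
  by have := normr_ge0 mu; have := normr_ge0 (a - b); nra.
have w2 : w ^+ 2 <= mu ^+ 2 / 4.
  have ab2 : ((a - b) / 2) ^+ 2 <= 1 / 4.
    rewrite -real_normK ?num_real // normrM [`|2^-1|]ger0_norm ?invr_ge0 //.
    by have := normr_ge0 (a - b); nra.
  by rewrite /w exprMn; have := sqr_ge0 mu; nra.
by have := expR_add_expRN_le w_le; lra.
Qed.

End ExpInequalities.

Section TailNumerics.
Variable R : realType.

Lemma quadratic_tail_le (d : nat) (t lam : R) : (0 < d)%N ->
  lam = 4 * t / (3 * d%:R) ->
  2 * expR (- (lam * t)) * (1 + 3 / 16 * lam ^+ 2) ^+ (d + d) <=
    2 * expR (- (2 * t ^+ 2 / (3 * d%:R))).
Proof.
move=> d_gt0 lamE; rewrite -mulrA ler_pM2l //.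
have D_gt0 : 0 < d%:R :> R by rewrite ltr0n.
apply: le_trans (_ : expR (- (lam * t)) * expR ((d + d)%:R * (3 / 16 * lam ^+ 2)) <= _).
  rewrite ler_wpM2l ?expR_ge0 // expRM_natl lerXn2r ?nnegrE ?expR_ge0 ?expR_ge1Dx //.
  by have := sqr_ge0 lam; lra.
have expo : - (lam * t) + (d + d)%:R * (3 / 16 * lam ^+ 2) = - (2 * t ^+ 2 / (3 * d%:R)).
  by rewrite natrD lamE; field; lra.
by rewrite -expRD expo.
Qed.

Lemma ln_tail_le (r : R) : 12 < r -> 2 * expR (- (8 * (ln r / 3))) <= (12 * r)^-1.
Proof.
move=> r_gt; set Q := expR (ln r / 3).
have Q_gt0 : 0 < Q by apply: expR_gt0.
have Q3 : Q ^+ 3 = r.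
  by rewrite /Q -expRM_natl (_ : 3%:R * (ln r / 3) = ln r) ?lnK ?posrE //; [lra | field].
have Q2 : 2 < Q.
  rewrite ltNge; apply/negP => Q_le.
  have : Q ^+ 3 <= 2 ^+ 3 by rewrite lerXn2r ?nnegrE //; lra.
  by rewrite Q3; lra.
have Q5 : 24 <= Q ^+ 5 by rewrite (exprD Q 3 2) Q3; have := sqr_ge0 Q; nra.
rewrite expRN expRM_natl -/Q -Q3 -subr_ge0.
rewrite (_ : _ - _ = (Q ^+ 5 - 24) / (12 * Q ^+ 8)); last by field; rewrite gt_eqF.
by rewrite divr_ge0 ?subr_ge0 // mulr_ge0 // exprn_ge0 // ltW.
Qed.

Lemma tail_bound_le (d : nat) (eps t lam : R) :
  0 < eps -> eps < 1 / 3 -> (4 <= d)%N ->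
  t ^+ 2 = 4 * d%:R * ln (d%:R / eps) -> lam = 4 * t / (3 * d%:R) ->
  2 * expR (- (lam * t)) * (1 + 3 / 16 * lam ^+ 2) ^+ (d + d) <= eps / d%:R / 12.
Proof.
move=> eps_gt0 eps_lt d_ge t2 lamE.
have D_ge : 4 <= d%:R :> R by rewrite (ler_nat R 4).
have r_gt : 12 < d%:R / eps by rewrite ltr_pdivlMr //; lra.
apply: le_trans (quadratic_tail_le (leq_trans _ d_ge) lamE) _ => //.
rewrite t2 (_ : 2 * _ / _ = 8 * (ln (d%:R / eps) / 3)); last by field; lra.
apply: le_trans (ln_tail_le r_gt) _.
by have -> : (12 * (d%:R / eps))^-1 = eps / d%:R / 12 by field; lra.
Qed.

End TailNumerics.

Lemma card_gt_mul_le_sum (R : realType) (T : finType) (F : T -> R) (M : R) :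
  (forall x, 0 <= F x) -> #|[pred x | M < F x]|%:R * M <= \sum_x F x.
Proof.
move=> F_ge0; rewrite (bigID (fun x => M < F x)) /= mulr_natl -sumr_const.
apply: le_trans (_ : \sum_(x | M < F x) F x <= _).
  by apply: ler_sum => x; rewrite inE => /ltW.
by rewrite lerDl sumr_ge0.
Qed.

Lemma expR_add_expRN_tail_ge1 (R : realType) (lam t u : R) : 0 <= lam -> t < `|u| ->
  1 <= (expR (lam * u) + expR (- (lam * u))) * expR (- (lam * t)).
Proof.
move=> lam_ge; rewrite mulrDl -!expRD ltr_normr => /orP [] tu.
- have := expR_ge1Dx (lam * u + - (lam * t)).
  by have := expR_ge0 (- (lam * u) + - (lam * t)); nra.
- have := expR_ge1Dx (- (lam * u) + - (lam * t)).
  by have := expR_ge0 (lam * u + - (lam * t)); nra.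
Qed.

Definition far_partners (R : realType) d (g : cube d -> R) (t : R) (p : cube d) : nat :=
  #|[pred x : cube d | t < `|g x - g p|]|.

Section FarPartners.
Variables (R : realType) (d : nat) (g : cube d -> R).
Hypothesis Lg : Defs.lipschitz g.

Lemma far_partners_eq0 (t : R) p : d%:R <= t -> far_partners g t p = 0%N.
Proof.
move=> t_ge; apply: eq_card0 => x; rewrite inE; apply/negbTE; rewrite -leNgt.
by apply: le_trans (Lg x p) (le_trans _ t_ge); rewrite ler_nat hamming_le_dim.
Qed.

Lemma sum_expR_mul_le (lam : R) : `|lam| <= 4 / 3 ->
  (\sum_x expR (lam * g x)) * (\sum_x expR (- lam * g x)) <=
    (1 + 3 / 16 * lam ^+ 2) ^+ (d + d) * (2 ^ d)%:R ^+ 2.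
Proof.
move=> lam_le; set K := 1 + 3 / 16 * lam ^+ 2.
have step (mu : R) : mu ^+ 2 = lam ^+ 2 -> `|mu| <= 4 / 3 -> forall a b : R,
    `|a - b| <= 1 -> expR (mu * a) + expR (mu * b) <= 2 * K * expR (mu * ((a + b) / 2)).
  by move=> mu2 mu_le a b; rewrite /K -mu2; exact: expR_midpoint_le.
have Nlam_le : `|- lam| <= 4 / 3 by rewrite normrN.
have up := sum_expR_lipschitz_le (step lam erefl lam_le) Lg.
have down := sum_expR_lipschitz_le (step (- lam) (sqrrN lam) Nlam_le) Lg.
have sum_ge0 (mu : R) : 0 <= \sum_x expR (mu * g x).
  by apply: sumr_ge0 => x _; apply: expR_ge0.
apply: le_trans (ler_pM (sum_ge0 _) (sum_ge0 _) up down) _.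
rewrite mulrACA -expRD mulNr addrN expR0 mulr1.
by rewrite mulrACA -exprD expr2.
Qed.

Lemma sum_far_partners_le (lam t : R) : 0 <= lam <= 4 / 3 ->
  \sum_p (far_partners g t p)%:R <=
    2 * expR (- (lam * t)) * (1 + 3 / 16 * lam ^+ 2) ^+ (d + d) * (2 ^ d)%:R ^+ 2.
Proof.
case/andP=> lam_ge lam_le; set c := expR (- (lam * t)).
pose F x p := (expR (lam * g x) * expR (- lam * g p) +
  expR (- lam * g x) * expR (lam * g p)) * c.
have F_ge0 x p : 0 <= F x p by rewrite mulr_ge0 ?addr_ge0 ?mulr_ge0 ?expR_ge0.
have far_le p : (far_partners g t p)%:R <= \sum_x F x p.
  rewrite /far_partners -sumr_const [X in _ <= X](bigID (fun x => t < `|g x - g p|)) /=.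
  apply: le_trans (_ : \sum_(x | t < `|g x - g p|) F x p <= _); last first.
    by rewrite lerDl sumr_ge0.
  apply: ler_sum => x; rewrite inE => far_x.
  have -> : F x p = (expR (lam * (g x - g p)) + expR (- (lam * (g x - g p)))) * c.
    by rewrite /F -!expRD; congr ((expR _ + expR _) * _); ring.
  exact: expR_add_expRN_tail_ge1.
apply: le_trans (ler_sum _ (fun p _ => far_le p)) _.
have -> : \sum_p \sum_x F x p =
    2 * c * ((\sum_x expR (lam * g x)) * (\sum_x expR (- lam * g x))).
  under eq_bigr => p _ do rewrite -mulr_suml big_split /= -!mulr_suml.
  by rewrite -mulr_suml big_split /= -!mulr_sumr; ring.
rewrite -[2 * c * _ * _]mulrA ler_wpM2l ?mulr_ge0 ?expR_ge0 //.
by apply: sum_expR_mul_le; rewrite ger0_norm.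
Qed.

Lemma card_far_points_le (eps t : R) : 0 < eps -> eps < 1 / 3 -> (4 <= d)%N ->
  0 <= t -> t ^+ 2 = 4 * d%:R * ln (d%:R / eps) ->
  #|[pred p | eps / d%:R * (2 ^ d)%:R < (far_partners g t p)%:R]|%:R <= (2 ^ d)%:R / 12 :> R.
Proof.
move=> eps_gt0 eps_lt d_ge t_ge0 t2; set M := eps / d%:R * (2 ^ d)%:R.
have D_gt0 : 0 < d%:R :> R by rewrite ltr0n (leq_trans _ d_ge).
have M_gt0 : 0 < M by rewrite !mulr_gt0 ?invr_gt0 ?natr_pow2_gt0.
have sum_le : \sum_p (far_partners g t p)%:R <= M * (2 ^ d)%:R / 12.
  case: (lerP d%:R t) => [t_ge | t_lt].
    rewrite big1 => [|p _]; last by rewrite far_partners_eq0.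
    by rewrite divr_ge0 // mulr_ge0 ?ltW ?natr_pow2_gt0.
  have lam_ge : 0 <= 4 * t / (3 * d%:R) <= 4 / 3.
    by apply/andP; split; rewrite ?divr_ge0 ?ler_pdivrMr; lra.
  apply: le_trans (sum_far_partners_le t lam_ge) _.
  apply: le_trans (ler_wpM2r (sqr_ge0 _) (tail_bound_le eps_gt0 eps_lt d_ge t2 erefl)) _.
  by have -> : eps / d%:R / 12 * (2 ^ d)%:R ^+ 2 = M * (2 ^ d)%:R / 12 by rewrite /M; field; lra.
rewrite -(ler_pM2r M_gt0); apply: le_trans (card_gt_mul_le_sum _ _) _ => [p|].
  exact: ler0n.
by rewrite [_ / 12 * M]mulrC mulrA.
Qed.

End FarPartners.

Section VertexCover.
Variables (R : realType) (d : nat) (f : cube d -> R) (C : {set cube d}).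

Lemma lipschitz_off_cover x y : vertex_cover f C -> x \notin C -> y \notin C ->
  `|f x - f y| <= (hamming x y)%:R.
Proof.
move=> cover xC yC; rewrite leNgt; apply/negP => viol.
have : B0 f x y by rewrite /B0 /VS lt_max ltxx orbF subr_gt0.
by move/cover; rewrite (negbTE xC) (negbTE yC).
Qed.

Lemma lipschitz_extension_off_cover (y0 : cube d) : vertex_cover f C -> y0 \notin C ->
  exists g : cube d -> R, Defs.lipschitz g /\ forall x, x \notin C -> g x = f x.
Proof.
move=> cover y0C; pose F x y := f y + (hamming x y)%:R.
pose g x := F x [arg min_(y < y0 | y \notin C) F x y]%O.
have g_le x y : y \notin C -> g x <= F x y.
  by move=> yC; rewrite /g; case: arg_minP => // z _; apply.
have g_eq x : exists2 y, y \notin C & g x = F x y.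
  by rewrite /g; case: arg_minP => // y yC _; exists y.
have g_lip x z : g x <= g z + (hamming x z)%:R.
  have [y yC ->] := g_eq z; apply: le_trans (g_le x y yC) _.
  by rewrite /F -addrA lerD2l -natrD ler_nat addnC hamming_triangle.
exists g; split=> [x z|x xC].
  by rewrite ler_norml; have := g_lip z x; have := g_lip x z; rewrite hamming_sym; lra.
apply/eqP; rewrite eq_le; have := g_le x x xC; rewrite /F hamming_xx addr0 => ->.
have [y yC ->] := g_eq x; have := lipschitz_off_cover cover xC yC.
by rewrite /F ler_norml; lra.
Qed.

Lemma card_cover_le_l0 : min_vertex_cover f C -> #|C|%:R / (2 ^ d)%:R <= l0_Lip f.
Proof.
move=> [_ min_cover]; apply: lb_le_inf.
  exists (disagree f (fun=> 0)), (fun=> 0); split => // x y.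
  by rewrite subrr normr0.
move=> _ [g [Lg ->]]; rewrite /disagree ler_pM2r ?invr_gt0 ?natr_pow2_gt0 // ler_nat.
rewrite (_ : #|[pred x | f x != g x]| = #|[set x | f x != g x]|); last first.
  by apply: eq_card => x; rewrite !inE.
apply: min_cover => x y; rewrite !inE; apply: contraLR; rewrite negb_or !negbK.
rewrite /B0 /VS lt_max ltxx orbF subr_gt0 -leNgt.
by case/andP=> /eqP -> /eqP ->; apply: Lg.
Qed.

Lemma bad_point_far (g : cube d -> R) (t a : R) (p : cube d) :
  (forall x, x \notin C -> g x = f x) -> p \notin C ->
  epsC f C (fun r => ~~ intv (f p) t r) + a < prob_notin f (intv (f p) t) ->
  a * (2 ^ d)%:R < (far_partners g t p)%:R.
Proof.
move=> gf pC bad.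
have out_split : #|[pred x | ~~ intv (f p) t (f x)]| =
    (#|[pred x | (x \in C) && ~~ intv (f p) t (f x)]| +
     #|[pred x | (x \notin C) && ~~ intv (f p) t (f x)]|)%N.
  rewrite -(cardID (mem C) [pred x | ~~ intv (f p) t (f x)]).
  by congr (_ + _)%N; apply: eq_card => x; rewrite !inE andbC.
move: bad; rewrite /prob_notin /epsC out_split natrD mulrDl => bad.
have out_gt : a * (2 ^ d)%:R < #|[pred x | (x \notin C) && ~~ intv (f p) t (f x)]|%:R.
  by rewrite -ltr_pdivlMr ?natr_pow2_gt0 //; lra.
apply: lt_le_trans out_gt _; rewrite ler_nat; apply: subset_leq_card.
apply/fintype.subsetP => x; rewrite !inE => /andP [xC].
rewrite /intv negb_and -!ltNge gf // gf // ltr_normr.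
by case/orP => out; apply/orP; [right | left]; lra.
Qed.

End VertexCover.

Theorem lemma6p5 (R : realType) (d : nat) (eps : R) (f : cube d -> R)
    (C : {set cube d}) :
  0 < eps -> eps < 1 / 3 -> (4 <= d)%N ->
  l0_Lip f <= eps ->
  min_vertex_cover f C ->
  let t := 2 * Num.sqrt (d%:R * ln (d%:R / eps)) in
  #|[pred p : cube d |
       prob_notin f (intv (f p) t)
       > epsC f C (fun r => ~~ intv (f p) t r) + eps / d%:R]|%:R / (2 ^ d)%:R
  <= 5 / 12 :> R.
Proof.
move=> eps_gt0 eps_lt d_ge l0_le min_cover; cbv zeta.
set t := 2 * Num.sqrt (d%:R * ln (d%:R / eps)).
have N_gt0 := natr_pow2_gt0 R d.
have C_le : #|C|%:R <= eps * (2 ^ d)%:R.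
  by rewrite -ler_pdivrMr //; apply: le_trans (card_cover_le_l0 min_cover) l0_le.
have [y0 y0C] : exists y0, y0 \notin C.
  have : (0 < #|~: C|)%N.
    rewrite -(ltn_add2l #|C|) addn0 cardsC card_cube -(ltr_nat R); nra.
  by case/card_gt0P => y0; rewrite inE; exists y0.
have [g [Lg gf]] := lipschitz_extension_off_cover min_cover.1 y0C.
have t2 : t ^+ 2 = 4 * d%:R * ln (d%:R / eps).
  have D_ge : 4 <= d%:R :> R by rewrite (ler_nat R 4).
  rewrite exprMn sqr_sqrtr ?mulr_ge0 ?ln_ge0 ?ler_pdivlMr; [ring | lra..].
have far_le := card_far_points_le Lg eps_gt0 eps_lt d_ge
  (mulr_ge0 (ler0n _ 2) (sqrtr_ge0 _)) t2.
rewrite ler_pdivrMr //; apply: le_trans (_ : (#|C| + #|[pred p |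
    eps / d%:R * (2 ^ d)%:R < (far_partners g t p)%:R]|)%:R <= _); last first.
  by rewrite natrD; nra.
rewrite ler_nat -cardUI; apply: leq_trans (leq_addr _ _).
apply: subset_leq_card; apply/fintype.subsetP => p; rewrite !inE.
by case: (boolP (p \in C)) => //= pC; apply: bad_point_far.
Qed.
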